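(* Let $E$ be a regular $(a,b)$-module and let $0=F_0\subsetneq F_1\subsetneq\dots\subsetneq F_n=E$ be a Jordan–Hölder composition series with $F_i/F_{i-1}\simeq E_{\lambda_i}$ for all $i$. Suppose there is $j$ with $\lambda_{j+1}\not\equiv\lambda_j\pmod{\mathbb{Z}}$. Then there is another Jordan–Hölder composition series of $E$ which differs from the given one only in the $j$-th term, replaced by some $F'_j$, such that $F'_j/F_{j-1}\simeq E_{\lambda'_j}$ and $F_{j+1}/F'_j\simeq E_{\lambda'_{j+1}}$ with $\lambda_j\equiv\lambda'_{j+1}\pmod{\mathbb{Z}}$ and $\lambda_{j+1}\equiv\lambda'_j\pmod{\mathbb{Z}}$.
   Context: An $(a,b)$-module is a free module $E$ of finite rank over $\mathbb{C}[[b]]$ with a $\mathbb{C}$-linear endomorphism $a$ satisfying $ab-ba=b^2$. A sub-$(a,b)$-module is a sub-$\mathbb{C}[[b]]$-module stable by $a$; it is normal if the quotient is free over $\mathbb{C}[[b]]$. $E$ is regular if it embeds into an $(a,b)$-module $E'$ with $aE'\subset bE'$. $E_\lambda$ is the rank-one $(a,b)$-module generated by $e_\lambda$ with $ae_\lambda=\lambda be_\lambda$. A Jordan–Hölder composition series of a regular $E$ of rank $n$ is a chain $0=F_0\subsetneq\dots\subsetneq F_n=E$ of normal sub-$(a,b)$-modules of $E$ with $F_i$ of rank $i$; the quotients $F_i/F_{i-1}$ are then isomorphic to some $E_{\lambda_i}$. *)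

From mathcomp Require Import all_boot all_algebra.
From mathcomp Require Import complex Rstruct.
Set Implicit Arguments. Unset Strict Implicit. Unset Printing Implicit Defensive.
Import GRing.Theory.
Local Open Scope ring_scope.

Definition C : numClosedFieldType := complex Rdefinitions.R.

(* Formal power series in b over C: coefficient sequences. *)
Definition ps := nat -> C.

(* The free C[[b]]-module of rank n, C[[b]]^n, written as power series in b
   with coefficients in C^n: x = \sum_k x k b^k.  Every free C[[b]]-module
   of rank n is isomorphic to this one. *)
Definition abE (n : nat) := nat -> 'rV[C]_n.

Definition ezero n : abE n := fun _ => 0.
Definition eadd n (x y : abE n) : abE n := fun k => x k + y k.
Definition cmul n (c : C) (x : abE n) : abE n := fun k => c *: x k.
Definition bmul n (x : abE n) : abE n :=
  fun k => if k is k'.+1 then x k' else 0.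
Definition smul n (s : ps) (x : abE n) : abE n :=
  fun k => \sum_(i < k.+1) s i *: x (k - i)%N.
Definition lincomb n k (s : 'I_k -> ps) (f : 'I_k -> abE n) : abE n :=
  fun l => \sum_(i < k) smul (s i) (f i) l.

Definition is_ab_structure n (a : abE n -> abE n) : Prop :=
  [/\ forall x y, a (eadd x y) = eadd (a x) (a y),
      forall c x, a (cmul c x) = cmul c (a x) &
      forall x, a (bmul x) = eadd (bmul (a x)) (bmul (bmul x))].

Definition ablinear n m (phi : abE n -> abE m) : Prop :=
  (forall x y, phi (eadd x y) = eadd (phi x) (phi y)) /\
  (forall s x, phi (smul s x) = smul s (phi x)).

Definition is_regular n (a : abE n -> abE n) : Prop :=
  exists m (a' : abE m -> abE m) (phi : abE n -> abE m),
    [/\ is_ab_structure a', ablinear phi, injective phi,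
        (forall x, phi (a x) = a' (phi x)) &
        (forall y, exists z, a' y = bmul z)].

Definition is_sub_ab n (a : abE n -> abE n) (F : abE n -> Prop) : Prop :=
  [/\ F (ezero n),
      forall x y, F x -> F y -> F (eadd x y),
      forall s x, F x -> F (smul s x) &
      forall x, F x -> F (a x)].

Definition free_rank n (F : abE n -> Prop) (k : nat) : Prop :=
  exists f : 'I_k -> abE n,
    [/\ forall i, F (f i),
        forall x, F x -> exists s, x = lincomb s f &
        forall s, lincomb s f = ezero n -> forall i l, s i l = 0].

(* For G a submodule of F, the quotient F/G is free over C[[b]]:
   some elements of F have classes forming a C[[b]]-basis of F/G. *)
Definition quotient_free n (F G : abE n -> Prop) : Prop :=
  exists k (f : 'I_k -> abE n),
    [/\ forall i, F (f i),
        forall x, F x -> exists s y, G y /\ x = eadd (lincomb s f) y &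
        forall s, G (lincomb s f) -> forall i l, s i l = 0].

Definition is_normal_sub n (a : abE n -> abE n) (F : abE n -> Prop) : Prop :=
  is_sub_ab a F /\ quotient_free (fun _ => True) F.

(* F/G is isomorphic, as an (a,b)-module, to E_lam: the isomorphism sends
   e_lam to the class of some e in F; it is C[[b]]-linear bijective
   (the class of e freely generates F/G) and commutes with a
   (a [e] = lam b [e] in F/G). *)
Definition quot_iso_E n (a : abE n -> abE n) (G F : abE n -> Prop) (lam : C)
  : Prop :=
  exists e, [/\ F e,
    forall x, F x -> exists s y, G y /\ x = eadd (smul s e) y,
    forall s, G (smul s e) -> forall l, s l = 0 &
    G (eadd (a e) (cmul (- lam) (bmul e)))].

Definition is_JH n (a : abE n -> abE n) (F : nat -> abE n -> Prop) : Prop :=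
  [/\ forall x, F 0%N x <-> x = ezero n,
      forall x, F n x,
      forall i, (i <= n)%N -> is_normal_sub a (F i) /\ free_rank (F i) i &
      forall i, (0 < i <= n)%N ->
        (forall x, F i.-1 x -> F i x) /\ exists x, F i x /\ ~ F i.-1 x].

Definition congZ (x y : C) : Prop := exists z : int, x - y = z%:~R.

From HB Require Import structures.
From mathcomp Require Import all_boot all_algebra.
From mathcomp Require Import boolp ring.
Set Implicit Arguments. Unset Strict Implicit. Unset Printing Implicit Defensive.
Import GRing.Theory.
Local Open Scope ring_scope.

(* Let [e1], [e2] lift generators of [F_j/F_(j-1)] and [F_(j+1)/F_j], so that
   [(a - l1 b) e1 = 0] and [(a - l2 b) e2 = S e1] modulo [F_(j-1)], with
   [l1 = lambda_j], [l2 = lambda_(j+1)] and [S] in [C[[b]]].  By the Leibniz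
   rule [a (s x) = s a x + b^2 s' x], replacing [e2] by [v = e2 + beta e1]
   turns [S] into [S + (l1 - l2) b beta + b^2 beta'].  Since [l1 - l2] is not
   an integer, [beta] can be chosen coefficientwise so that only the constant
   [S(0)] survives.  If [S(0) = 0], then [F'_j = F_(j-1) + C[[b]] v] swaps the
   two eigenvalues.  Otherwise [w = b v + t e1], for the constant [t] with
   [S(0) = - t (l1 - l2 - 1)], satisfies [(a - (l2 + 1) b) w = 0] modulo
   [F_(j-1)], and [F'_j = F_(j-1) + C[[b]] w] has quotients [E_(l2 + 1)] and
   [E_(l1 - 1)]. *)

(** * Formal power series *)

HB.instance Definition _ := Choice.copy ps (nat -> C).

Definition ps_add (s t : ps) : ps := fun k => s k + t k.
Definition ps_opp (s : ps) : ps := fun k => - s k.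
Definition ps_zero : ps := fun _ => 0.

Lemma ps_addA : associative ps_add.
Proof. by move=> s t u; apply: funext => k; rewrite /ps_add addrA. Qed.
Lemma ps_addC : commutative ps_add.
Proof. by move=> s t; apply: funext => k; rewrite /ps_add addrC. Qed.
Lemma ps_add0 : left_id ps_zero ps_add.
Proof. by move=> s; apply: funext => k; rewrite /ps_add add0r. Qed.
Lemma ps_addN : left_inverse ps_zero ps_opp ps_add.
Proof. by move=> s; apply: funext => k; rewrite /ps_add addNr. Qed.
HB.instance Definition _ := GRing.isZmodule.Build ps ps_addA ps_addC ps_add0 ps_addN.

Lemma ps_addE (s t : ps) k : (s + t) k = s k + t k. Proof. by []. Qed.
Lemma ps_oppE (s : ps) k : (- s) k = - s k. Proof. by []. Qed.

Lemma ps0P (s : ps) : (forall k, s k = 0) <-> s = 0.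
Proof. by split => [s0|-> k //]; apply: funext => k; rewrite s0. Qed.

Definition ps_mul (s t : ps) : ps := fun k => \sum_(i < k.+1) s i * t (k - i)%N.
Definition ps_one : ps := fun k => if k is 0 then 1 else 0.

Definition ps_poly N (s : ps) : {poly C} := \poly_(i < N) s i.

Lemma coef_ps_poly N s k : (k < N)%N -> (ps_poly N s)`_k = s k.
Proof. by move=> kN; rewrite coef_poly kN. Qed.

(* Below order [N], the Cauchy product is the product of truncated polynomials;
   this transports associativity and commutativity from [{poly C}]. *)
Lemma ps_mul_poly N s t k :
  (k < N)%N -> ps_mul s t k = (ps_poly N s * ps_poly N t)`_k.
Proof.
move=> kN; rewrite coefM; apply: eq_bigr => i _.
have iN : (i < N)%N by apply: leq_ltn_trans kN; rewrite -ltnS.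
have kiN : (k - i < N)%N by apply: leq_ltn_trans kN; apply: leq_subr.
by rewrite !coef_ps_poly.
Qed.

Lemma coefMl_eq N (p q r : {poly C}) k :
  (forall i, (i < N)%N -> p`_i = q`_i) -> (k < N)%N -> (p * r)`_k = (q * r)`_k.
Proof.
move=> pq kN; rewrite !coefM; apply: eq_bigr => i _; rewrite pq //.
by apply: leq_ltn_trans kN; rewrite -ltnS.
Qed.

Lemma ps_mulA : associative ps_mul.
Proof.
move=> s t u; apply: funext => k; set N := k.+1.
have kN : (k < N)%N by [].
have poly_mul v w i : (i < N)%N ->
    (ps_poly N (ps_mul v w))`_i = (ps_poly N v * ps_poly N w)`_i.
  by move=> iN; rewrite coef_ps_poly // (ps_mul_poly _ _ iN).
rewrite !(ps_mul_poly _ _ kN) mulrC (coefMl_eq _ (poly_mul t u)) //.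
by rewrite (coefMl_eq _ (poly_mul s t)) // mulrC mulrA.
Qed.

Lemma ps_mulC : commutative ps_mul.
Proof.
by move=> s t; apply: funext => k; rewrite !(@ps_mul_poly k.+1) // mulrC.
Qed.

Lemma ps_mul1 : left_id ps_one ps_mul.
Proof.
move=> s; apply: funext => k; rewrite /ps_mul big_ord_recl subn0 mul1r.
by rewrite big1 ?addr0 // => i _; rewrite mul0r.
Qed.

Lemma ps_mulDl : left_distributive ps_mul ps_add.
Proof.
move=> s t u; apply: funext => k; rewrite /ps_mul /ps_add -big_split.
by apply: eq_bigr => i _; rewrite mulrDl.
Qed.

Lemma ps_one_neq0 : ps_one != 0.
Proof. by apply/eqP => /(congr1 (fun s : ps => s 0%N)) /eqP; rewrite oner_eq0. Qed.

HB.instance Definition _ :=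
  GRing.Zmodule_isComNzRing.Build ps ps_mulA ps_mulC ps_mul1 ps_mulDl ps_one_neq0.

Lemma ps_mulE (s t : ps) k : (s * t) k = \sum_(i < k.+1) s i * t (k - i)%N.
Proof. by []. Qed.

Definition psC (c : C) : ps := fun k => if k is 0 then c else 0.
Definition psX : ps := fun k => if k is 1 then 1 else 0.
(* [euler s = b s'] *)
Definition euler (s : ps) : ps := fun k => k%:R * s k.
Definition ps_shift (s : ps) : ps := fun k => s k.+1.

Lemma psC_mulE c s k : (psC c * s) k = c * s k.
Proof.
rewrite ps_mulE big_ord_recl subn0 big1 ?addr0 //.
by move=> i _; rewrite mul0r.
Qed.

Lemma psX_mulE s k : (psX * s) k = if k is k'.+1 then s k' else 0.
Proof.
rewrite ps_mulE; case: k => [|k]; first by rewrite big_ord1 mul0r.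
rewrite 2!big_ord_recl big1 ?addr0 => [|i _]; last by rewrite mul0r.
by rewrite mul0r add0r mul1r subn1.
Qed.

Lemma psCD c d : psC (c + d) = psC c + psC d.
Proof. by apply: funext => -[|k]; rewrite ps_addE ?addr0. Qed.
Lemma psCN c : psC (- c) = - psC c.
Proof. by apply: funext => -[|k]; rewrite ps_oppE ?oppr0. Qed.
Lemma psCB c d : psC (c - d) = psC c - psC d.
Proof. by rewrite psCD psCN. Qed.
Lemma psCM c d : psC (c * d) = psC c * psC d.
Proof. by apply: funext => -[|k]; rewrite psC_mulE ?mulr0. Qed.
Lemma psC0 : psC 0 = 0.
Proof. by apply: funext => -[|k]. Qed.
Lemma psC1 : psC 1 = 1.
Proof. by apply: funext => -[|k]. Qed.

Lemma psX_neq0 : psX != 0.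
Proof. by apply/eqP => /(congr1 (fun s : ps => s 1%N)) /eqP; rewrite oner_eq0. Qed.

Lemma ps_horner s : s = psC (s 0%N) + psX * ps_shift s.
Proof. by apply: funext => -[|k]; rewrite ps_addE psX_mulE ?addr0 ?add0r. Qed.

Lemma eulerD s t : euler (s + t) = euler s + euler t.
Proof. by apply: funext => k; rewrite /euler !ps_addE mulrDr. Qed.

Lemma euler_psC c : euler (psC c) = 0.
Proof. by apply: funext => -[|k]; rewrite /euler ?mul0r ?mulr0. Qed.

Lemma euler_psXM s : euler (psX * s) = psX * s + psX * euler s.
Proof.
apply: funext => -[|k]; rewrite /euler ps_addE !psX_mulE ?mul0r ?addr0 //.
by rewrite -addn1 natrD mulrDl mul1r addrC.
Qed.

(** * The (a,b)-module structure *)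

Section AbModule.
Variable n : nat.
Local Notation E := (abE n).

HB.instance Definition _ := Choice.copy E (nat -> 'rV[C]_n).

Definition eopp (x : E) : E := fun k => - x k.
Lemma eaddA : associative (@eadd n).
Proof. by move=> x y z; apply: funext => k; rewrite /eadd addrA. Qed.
Lemma eaddC : commutative (@eadd n).
Proof. by move=> x y; apply: funext => k; rewrite /eadd addrC. Qed.
Lemma eadd0 : left_id (ezero n) (@eadd n).
Proof. by move=> x; apply: funext => k; rewrite /eadd add0r. Qed.
Lemma eaddN : left_inverse (ezero n) eopp (@eadd n).
Proof. by move=> x; apply: funext => k; rewrite /eadd addNr. Qed.
HB.instance Definition _ := GRing.isZmodule.Build E eaddA eaddC eadd0 eaddN.

Definition coord_ps (x : E) (c : 'I_n) : ps := fun k => x k 0 c.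

Lemma coord_ps_inj (x y : E) : (forall c, coord_ps x c = coord_ps y c) -> x = y.
Proof.
move=> xy; apply: funext => k; apply/rowP => c.
exact: (congr1 (fun s : ps => s k) (xy c)).
Qed.

Lemma coord_psD (x y : E) c : coord_ps (x + y) c = coord_ps x c + coord_ps y c.
Proof. by apply: funext => k; rewrite /coord_ps ps_addE /= /eadd mxE. Qed.
Lemma coord_psN (x : E) c : coord_ps (- x) c = - coord_ps x c.
Proof. by apply: funext => k; rewrite /coord_ps ps_oppE /= /eopp mxE. Qed.
Lemma coord_psZ s (x : E) c : coord_ps (smul s x) c = s * coord_ps x c.
Proof.
apply: funext => k; rewrite /coord_ps /smul summxE ps_mulE.
by apply: eq_bigr => i _; rewrite mxE.
Qed.

Lemma smulA s t (x : E) : smul s (smul t x) = smul (s * t) x.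
Proof. by apply: coord_ps_inj => c; rewrite !coord_psZ mulrA. Qed.
Lemma smul1 : left_id 1 (@smul n).
Proof. by move=> x; apply: coord_ps_inj => c; rewrite coord_psZ mul1r. Qed.
Lemma smulDr s : {morph smul s : x y / x + y}.
Proof.
by move=> x y; apply: coord_ps_inj => c; rewrite !(coord_psD, coord_psZ) mulrDr.
Qed.
Lemma smulDl (x : E) : {morph (@smul n)^~ x : s t / s + t}.
Proof.
by move=> s t; apply: coord_ps_inj => c; rewrite !(coord_psD, coord_psZ) mulrDl.
Qed.
HB.instance Definition _ := GRing.Zmodule_isLmodule.Build ps E smulA smul1 smulDr smulDl.

Lemma eaddE (x y : E) : eadd x y = x + y. Proof. by []. Qed.
Lemma smulE s (x : E) : smul s x = s *: x. Proof. by []. Qed.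
Lemma ezeroE : ezero n = 0. Proof. by []. Qed.

Lemma cmulE c (x : E) : cmul c x = psC c *: x.
Proof.
apply: coord_ps_inj => i; rewrite coord_psZ; apply: funext => k.
by rewrite psC_mulE /coord_ps /cmul mxE.
Qed.

Lemma bmulE (x : E) : bmul x = psX *: x.
Proof.
apply: coord_ps_inj => i; rewrite coord_psZ; apply: funext => k.
by rewrite psX_mulE /coord_ps /bmul; case: k => [|k]; rewrite ?mxE.
Qed.

Lemma eigen_defectE (y e : E) l :
  eadd y (cmul (- l) (bmul e)) = y - (psC l * psX) *: e.
Proof. by rewrite cmulE bmulE scalerA psCN mulNr scaleNr. Qed.

Lemma lincombE k (s : 'I_k -> ps) (f : 'I_k -> E) :
  lincomb s f = \sum_(i < k) s i *: f i.
Proof.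
apply: funext => l; rewrite /lincomb.
by apply/esym/(big_morph (fun x : E => x l)).
Qed.

End AbModule.

Ltac solve_lincomb :=
  apply: coord_ps_inj => ?; rewrite ?(coord_psD, coord_psN, coord_psZ); ring.

Section Leibniz.
Variables (n : nat) (a : abE n -> abE n).
Hypothesis Hab : is_ab_structure a.

Lemma abD x y : a (x + y) = a x + a y.
Proof. by case: Hab => aD _ _; apply: aD. Qed.
Lemma abC c x : a (psC c *: x) = psC c *: a x.
Proof. by case: Hab => _ aC _; rewrite -!cmulE aC. Qed.
Lemma abX x : a (psX *: x) = psX *: a x + (psX * psX) *: x.
Proof. by case: Hab => _ _ aX; rewrite -!bmulE aX !bmulE -scalerA. Qed.

(* The defect [a (s x) - s a x - b (b s') x] vanishes on constants and is
   multiplied by [b] under [s |-> psC c + b s]; by the Horner decomposition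
   it is divisible by every power of [b]. *)
Lemma ab_scale s x : a (s *: x) = s *: a x + (psX * euler s) *: x.
Proof.
pose D s := a (s *: x) - s *: a x - (psX * euler s) *: x.
have D_horner c t : D (psC c + psX * t) = psX *: D t.
  rewrite /D scalerDl abD abC -(scalerA psX t) abX eulerD euler_psC euler_psXM.
  by solve_lincomb.
suff D0 k t : D t k = 0.
  by apply/eqP; rewrite -subr_eq0 opprD addrA; apply/eqP/funext => k; apply: D0.
elim: k t => [|k IHk] t; rewrite (ps_horner t) D_horner -bmulE //.
exact: IHk.
Qed.

End Leibniz.

(** * Sub-(a,b)-modules and Jordan-Hoelder series *)

Definition ord_extend T k (f : 'I_k -> T) (z : T) : 'I_k.+1 -> T :=
  fun i => if unlift ord_max i is Some i' then f i' else z.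

Lemma ord_extend_liftK T k (f : 'I_k -> T) z : ord_extend f z \o lift ord_max = f.
Proof. by apply: funext => i; rewrite /ord_extend /= liftK. Qed.
Lemma ord_extend_max T k (f : 'I_k -> T) z : ord_extend f z ord_max = z.
Proof. by rewrite /ord_extend unlift_none. Qed.

Lemma lincomb_ord_extend n k (s : 'I_k.+1 -> ps) (f : 'I_k -> abE n) p :
  lincomb s (ord_extend f p) = lincomb (s \o lift ord_max) f + s ord_max *: p.
Proof.
rewrite !lincombE big_ord_recr ord_extend_max; congr (_ + _).
apply: eq_bigr => i _; have -> : widen_ord (leqnSn k) i = lift ord_max i.
  by apply: ord_inj; rewrite lift_max.
by rewrite -[f i](congr1 (fun g => g i) (ord_extend_liftK f p)).
Qed.

Section SubAb.
Variables (n : nat) (a : abE n -> abE n) (P : abE n -> Prop).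
Hypothesis HP : is_sub_ab a P.

Lemma sub_ab0 : P 0. Proof. by case: HP. Qed.
Lemma sub_abD x y : P x -> P y -> P (x + y).
Proof. by case: HP => _ PD _ _; apply: PD. Qed.
Lemma sub_abZ s x : P x -> P (s *: x).
Proof. by case: HP => _ _ PZ _; apply: PZ. Qed.
Lemma sub_abA x : P x -> P (a x).
Proof. by case: HP => _ _ _ PA; apply: PA. Qed.
Lemma sub_abN x : P x -> P (- x).
Proof. by rewrite -scaleN1r; apply: sub_abZ. Qed.
Lemma sub_abB x y : P x -> P y -> P (x - y).
Proof. by move=> Px Py; apply: sub_abD => //; apply: sub_abN. Qed.
Lemma sub_ab_lincomb k (s : 'I_k -> ps) f : (forall i, P (f i)) -> P (lincomb s f).
Proof.
move=> Pf; rewrite lincombE; apply: (big_ind P sub_ab0 sub_abD) => i _.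
exact: sub_abZ.
Qed.

End SubAb.

Definition add_line n (G : abE n -> Prop) (p : abE n) : abE n -> Prop :=
  fun x => exists r g, G g /\ x = r *: p + g.

Section AddLine.
Variables (n : nat) (a : abE n -> abE n) (G : abE n -> Prop) (p : abE n).
Hypothesis HG : is_sub_ab a G.

Lemma add_line_incl x : G x -> add_line G p x.
Proof. by move=> Gx; exists 0, x; rewrite scale0r add0r. Qed.

Lemma add_line_gen : add_line G p p.
Proof. by exists 1, 0; rewrite scale1r addr0; split; [apply: sub_ab0 HG|]. Qed.

Lemma add_line_sub :
  is_ab_structure a -> add_line G p (a p) -> is_sub_ab a (add_line G p).
Proof.
move=> Hab [r0 [g0 [Gg0 ap]]]; split.
- exact: add_line_incl (sub_ab0 HG).
- move=> _ _ [r [g [Gg ->]]] [r' [g' [Gg' ->]]].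
  exists (r + r'), (g + g'); split; first exact: (sub_abD HG).
  by rewrite eaddE scalerDl addrACA.
- move=> s _ [r [g [Gg ->]]]; exists (s * r), (s *: g); split; first exact: (sub_abZ HG).
  by rewrite smulE scalerDr scalerA.
- move=> _ [r [g [Gg ->]]]; exists (r * r0 + psX * euler r), (r *: g0 + a g).
  split; first by apply: (sub_abD HG); [apply: (sub_abZ HG) | apply: (sub_abA HG)].
  by rewrite (abD Hab) (ab_scale Hab) ap; solve_lincomb.
Qed.

Hypothesis indp : forall r, G (r *: p) -> r = 0.

Lemma add_line_free_rank k : free_rank G k -> free_rank (add_line G p) k.+1.
Proof.
move=> [f [Gf spanf indf]]; exists (ord_extend f p); split.
- move=> i; case: (unliftP ord_max i) => [i'|] ->.
    by rewrite -[ord_extend f p _]/((ord_extend f p \o _) i') ord_extend_liftK;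
      apply: add_line_incl.
  by rewrite ord_extend_max; apply: add_line_gen.
- move=> _ [r [g [Gg ->]]]; have [s ->] := spanf g Gg.
  exists (ord_extend s r).
  by rewrite lincomb_ord_extend ord_extend_liftK ord_extend_max addrC.
- move=> s; rewrite lincomb_ord_extend ezeroE => s0.
  have smax : s ord_max = 0.
    apply: indp; have -> : s ord_max *: p = - lincomb (s \o lift ord_max) f.
      by apply/eqP; rewrite -addr_eq0 addrC s0.
    exact/(sub_abN HG)/(sub_ab_lincomb HG).
  rewrite smax scale0r addr0 in s0.
  move=> i; case: (unliftP ord_max i) => [i'|] ->; first exact: (indf _ s0).
  by rewrite smax.
Qed.

Lemma quot_iso_add_line mu :
  G (a p - (psC mu * psX) *: p) -> quot_iso_E a G (add_line G p) mu.
Proof.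
move=> eigp; exists p; split.
- exact: add_line_gen.
- by move=> _ [r [g [Gg ->]]]; exists r, g.
- by move=> s /indp -> l.
- by rewrite eigen_defectE.
Qed.

Variables (H : abE n -> Prop) (q : abE n).
Hypothesis span_pq : forall y, H y -> exists r t g, G g /\ y = r *: p + t *: q + g.
Hypothesis indep_pq : forall r t, G (r *: p + t *: q) -> r = 0 /\ t = 0.

Lemma add_line_indep r t g : G g -> t *: q = r *: p + g -> t = 0.
Proof.
move=> Gg tq; suff: G (- r *: p + t *: q) by move/indep_pq => [_ ->].
by rewrite tq scaleNr addrA addNr add0r.
Qed.

Lemma quot_iso_add_line_top nu :
  H q -> add_line G p (a q - (psC nu * psX) *: q) -> quot_iso_E a (add_line G p) H nu.
Proof.
move=> Hq eigq; exists q; split => //.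
- move=> _ /span_pq [r [t [g [Gg ->]]]]; exists t, (r *: p + g).
  by split; [exists r, g | rewrite eaddE smulE addrCA addrA].
- by move=> s [r [g [Gg /(add_line_indep Gg) ->]]].
- by rewrite eigen_defectE.
Qed.

Lemma add_line_quotient_free :
  is_sub_ab a H -> (forall x, G x -> H x) -> H p -> H q ->
  quotient_free (fun _ => True) H -> quotient_free (fun _ => True) (add_line G p).
Proof.
move=> HH GH Hp Hq [k [f [_ spanf indf]]]; exists k.+1, (ord_extend f q); split => //.
- move=> x _; have [s [_ [/span_pq [r [t [g [Gg ->]]]] ->]]] := spanf x I.
  exists (ord_extend s t), (r *: p + g); split; first by exists r, g.
  rewrite eaddE lincomb_ord_extend ord_extend_liftK ord_extend_max.
  by solve_lincomb.
- move=> s [r [g [Gg]]]; rewrite lincomb_ord_extend => sE.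
  have Hl : H (lincomb (s \o lift ord_max) f).
    rewrite -[lincomb _ _](addrK (s ord_max *: q)) sE.
    by apply: (sub_abB HH); [apply: (sub_abD HH); [apply: (sub_abZ HH)|apply: GH]
                            | apply: (sub_abZ HH)].
  have s0 := indf _ Hl.
  have lincomb0 : lincomb (s \o lift ord_max) f = 0.
    by rewrite lincombE big1 // => i _; rewrite ((ps0P _).1 (s0 i)) scale0r.
  rewrite lincomb0 add0r in sE; have smax := add_line_indep Gg sE.
  move=> i; case: (unliftP ord_max i) => [i'|] ->; first exact: s0.
  by rewrite smax.
Qed.

End AddLine.

Section JordanHolder.
Variables (n : nat) (a : abE n -> abE n) (F : nat -> abE n -> Prop).
Hypothesis HJH : is_JH a F.

Lemma JH_normal i : (i <= n)%N -> is_normal_sub a (F i).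
Proof. by case: HJH => _ _ normal _ /normal []. Qed.
Lemma JH_free_rank i : (i <= n)%N -> free_rank (F i) i.
Proof. by case: HJH => _ _ normal _ /normal []. Qed.
Lemma JH_sub i : (i <= n)%N -> is_sub_ab a (F i).
Proof. by move=> /JH_normal []. Qed.
Lemma JH_incl i x : (i < n)%N -> F i x -> F i.+1 x.
Proof. by case: HJH => _ _ _ chain lt_in; case: (chain i.+1 lt_in) => incl _; apply: incl. Qed.

Lemma JH_replace j F' : (0 < j < n)%N -> is_normal_sub a F' -> free_rank F' j ->
  (forall x, F j.-1 x -> F' x) -> (forall x, F' x -> F j.+1 x) ->
  (exists x, F' x /\ ~ F j.-1 x) -> (exists x, F j.+1 x /\ ~ F' x) ->
  is_JH a (fun i => if i == j then F' else F i).
Proof.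
move=> /andP[j0 jn] normF' rankF' lowF' upF' newF' oldF'.
case: HJH => F0 Fn normal chain; split.
- by rewrite (ltn_eqF j0).
- by rewrite (gtn_eqF jn).
- by move=> i i_le; case: eqP => [->|_]; [|apply: normal].
- move=> i /andP[i0 i_le]; have [->|ij] := eqVneq i j.
    by rewrite (ltn_eqF (_ : j.-1 < j)%N) ?ltn_predL.
  have [->|ij1] := eqVneq i j.+1; first by rewrite /= eqxx.
  have -> : (i.-1 == j) = false.
    by apply/negbTE; apply: contra ij1 => /eqP <-; rewrite prednK.
  by apply: chain; rewrite i0.
Qed.

Hypothesis Hab : is_ab_structure a.
Variable m : nat.
Hypothesis Hmn : (m.+1 < n)%N.

Lemma JH_exchange p q mu nu :
  F m.+2 p -> F m.+2 q -> ~ F m.+1 p ->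
  F m (a p - (psC mu * psX) *: p) ->
  add_line (F m) p (a q - (psC nu * psX) *: q) ->
  (forall y, F m.+2 y -> exists r t g, F m g /\ y = r *: p + t *: q + g) ->
  (forall r t, F m (r *: p + t *: q) -> r = 0 /\ t = 0) ->
  exists F'j, [/\ is_JH a (fun i => if i == m.+1 then F'j else F i),
      exists x, ~ (F'j x <-> F m.+1 x),
      quot_iso_E a (F m) F'j mu & quot_iso_E a F'j (F m.+2) nu].
Proof.
move=> Fp Fq nFp eigp eigq span_pq indep_pq.
have Gsub : is_sub_ab a (F m) := JH_sub (ltnW (ltnW Hmn)).
have Hsub : is_sub_ab a (F m.+2) := JH_sub Hmn.
have GF1 x : F m x -> F m.+1 x by apply: JH_incl; rewrite ltnW.
have GH x : F m x -> F m.+2 x by move/GF1; apply: JH_incl.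
have indp r : F m (r *: p) -> r = 0.
  by move=> Gp; case: (indep_pq r 0); rewrite ?scale0r ?addr0.
have ap : add_line (F m) p (a p).
  by exists (psC mu * psX), (a p - (psC mu * psX) *: p); split => //; rewrite addrC subrK.
exists (add_line (F m) p); split.
- apply: (@JH_replace m.+1); rewrite ?Hmn //.
  + split; first exact: (add_line_sub Gsub Hab ap).
    by apply: (add_line_quotient_free span_pq indep_pq Hsub GH) => //; apply: (JH_normal Hmn).2.
  + exact: (add_line_free_rank Gsub indp (JH_free_rank (ltnW (ltnW Hmn)))).
  + exact: add_line_incl.
  + by move=> _ [r [g [Gg ->]]]; apply: (sub_abD Hsub); [apply: (sub_abZ Hsub)|apply: GH].
  + by exists p; split; [apply: (add_line_gen p Gsub) | move/GF1].
  + exists q; split => // -[r [g [Gg qE]]].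
    by have /eqP := add_line_indep indep_pq Gg (etrans (scale1r q) qE); rewrite oner_eq0.
- by exists p => -[pF _]; apply/nFp/pF/(add_line_gen p Gsub).
- exact: (quot_iso_add_line Gsub indp).
- exact: (quot_iso_add_line_top span_pq indep_pq).
Qed.

End JordanHolder.

(** * Swapping two consecutive eigenvalues *)

Lemma not_congZ_natr_neq0 (l1 l2 : C) :
  ~ congZ l2 l1 -> forall k : nat, l1 - l2 - 1 + k%:R != 0.
Proof.
move=> nc k; apply/eqP => k_eq; apply: nc; exists (k%:Z - 1).
rewrite intrB -pmulrn; apply/eqP; rewrite -subr_eq0 -oppr_eq0 -k_eq.
by apply/eqP; ring.
Qed.

Section Swap.
Variables (n : nat) (a : abE n -> abE n) (F : nat -> abE n -> Prop).
Hypotheses (Hab : is_ab_structure a) (HJH : is_JH a F).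
Variable m : nat.
Hypothesis Hmn : (m.+1 < n)%N.
Variables (e1 e2 : abE n) (l1 l2 : C).
Hypotheses (He1 : F m.+1 e1) (He2 : F m.+2 e2).
Hypothesis span1 : forall x, F m.+1 x -> exists s y, F m y /\ x = s *: e1 + y.
Hypothesis indep1 : forall s, F m (s *: e1) -> s = 0.
Hypothesis eig1 : F m (a e1 - (psC l1 * psX) *: e1).
Hypothesis span2 : forall x, F m.+2 x -> exists s y, F m.+1 y /\ x = s *: e2 + y.
Hypothesis indep2 : forall s, F m.+1 (s *: e2) -> s = 0.
Variables (S : ps) (g2 : abE n).
Hypothesis Fg2 : F m g2.
Hypothesis eig2 : a e2 - (psC l2 * psX) *: e2 = S *: e1 + g2.
Hypothesis nonres : forall k : nat, l1 - l2 - 1 + k%:R != 0.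

Let Gsub : is_sub_ab a (F m) := JH_sub HJH (ltnW (ltnW Hmn)).
Let F1sub : is_sub_ab a (F m.+1) := JH_sub HJH (ltnW Hmn).
Let F2sub : is_sub_ab a (F m.+2) := JH_sub HJH Hmn.
Let GF1 x : F m x -> F m.+1 x. Proof. by apply: (JH_incl HJH); rewrite ltnW. Qed.
Let F12 x : F m.+1 x -> F m.+2 x. Proof. exact: (JH_incl HJH). Qed.

(* Comparing coefficients of [b^(k+1)] in [beta_normalizes_S] gives the
   recursion [(l1 - l2 + k) beta_k = - S_(k+1)], solvable since [l1 - l2] is
   not an integer. *)
Definition beta : ps := fun k => - S k.+1 / (l1 - l2 - 1 + k.+1%:R).
Definition v : abE n := e2 + beta *: e1.
Definition g1 : abE n := a e1 - (psC l1 * psX) *: e1.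

Lemma beta_normalizes_S :
  S + psC l1 * (psX * beta) + psX * euler beta - psC l2 * (psX * beta) = psC (S 0%N).
Proof.
apply: funext => -[|k].
  by rewrite !ps_addE ps_oppE !psC_mulE !psX_mulE /= !mulr0 addr0 subr0 addr0.
rewrite !ps_addE ps_oppE !psC_mulE !psX_mulE /psC /euler /beta.
have := nonres k.+1; rewrite -addn1 natrD => nz.
by field; exact: nz.
Qed.

Lemma a_vE : a v = (psC l2 * psX) *: v + psC (S 0%N) *: e1 + (g2 + beta *: g1).
Proof.
have ae1 : a e1 = (psC l1 * psX) *: e1 + g1 by rewrite /g1 addrC subrK.
have ae2 : a e2 = (psC l2 * psX) *: e2 + S *: e1 + g2 by rewrite -addrA -eig2 addrC subrK.
by rewrite /v (abD Hab) (ab_scale Hab) ae2 ae1 -beta_normalizes_S; solve_lincomb.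
Qed.

Lemma F_v_defect : F m (g2 + beta *: g1).
Proof. by apply: (sub_abD Gsub) => //; apply: (sub_abZ Gsub). Qed.

Lemma Fv : F m.+2 v.
Proof. by apply: (sub_abD F2sub) => //; apply: (sub_abZ F2sub); apply: F12. Qed.

Lemma swap_split : S 0%N = 0 -> exists F'j,
  [/\ is_JH a (fun i => if i == m.+1 then F'j else F i),
      exists x, ~ (F'j x <-> F m.+1 x),
      quot_iso_E a (F m) F'j l2 & quot_iso_E a F'j (F m.+2) l1].
Proof.
move=> S0; apply: (JH_exchange HJH Hab Hmn) Fv (F12 He1) _ _ _ _ _.
- move=> Fv1; move/eqP: (oner_neq0 ps); apply; apply: indep2.
  rewrite -[1 *: e2](addrK (beta *: e1)) scale1r.
  by apply: (sub_abB F1sub) => //; apply: (sub_abZ F1sub).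
- suff -> : a v - (psC l2 * psX) *: v = g2 + beta *: g1 by apply: F_v_defect.
  by rewrite a_vE S0 psC0 scale0r addr0 addrC addKr.
- by exists 0, g1; rewrite scale0r add0r.
- move=> _ /span2 [s [y1 [/span1 [t [g [Gg ->]]] ->]]].
  by exists s, (t - s * beta), g; split => //; rewrite /v; solve_lincomb.
- move=> r t Fvt.
  have r0 : r = 0.
    apply: indep2; rewrite (_ : r *: e2 = r *: v + t *: e1 - (r * beta + t) *: e1).
      by apply: (sub_abB F1sub); [apply: GF1 | apply: (sub_abZ F1sub)].
    by rewrite /v; solve_lincomb.
  by split => //; apply: indep1; move: Fvt; rewrite r0 scale0r add0r.
Qed.

Definition t0 : C := - S 0%N / (l1 - l2 - 1).
Definition w : abE n := psX *: v + psC t0 *: e1.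

Lemma swap_nonsplit : S 0%N != 0 -> exists F'j,
  [/\ is_JH a (fun i => if i == m.+1 then F'j else F i),
      exists x, ~ (F'j x <-> F m.+1 x),
      quot_iso_E a (F m) F'j (l2 + 1) & quot_iso_E a F'j (F m.+2) (l1 - 1)].
Proof.
move=> S0; have nz0 := nonres 0; rewrite addr0 in nz0.
have t0_neq0 : t0 != 0 by rewrite /t0 mulf_neq0 ?oppr_eq0 ?invr_eq0.
have S0E : psC (S 0%N) = - (psC t0 * (psC l1 - psC l2 - 1)).
  by rewrite -psC1 -!psCB -psCM -psCN /t0; congr psC; field.
have t0K : psC t0^-1 * psC t0 = 1 by rewrite -psCM mulVf // psC1.
have ae1 : a e1 = (psC l1 * psX) *: e1 + g1 by rewrite /g1 addrC subrK.
apply: (JH_exchange HJH Hab Hmn) (_ : F m.+2 w) Fv _ _ _ _ _.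
- by apply: (sub_abD F2sub); apply: (sub_abZ F2sub); [exact: Fv | exact: F12].
- move=> Fw; move/eqP: psX_neq0; apply; apply: indep2.
  rewrite (_ : psX *: e2 = w - (psX * beta + psC t0) *: e1); last by rewrite /w /v; solve_lincomb.
  by apply: (sub_abB F1sub) => //; apply: (sub_abZ F1sub).
- suff -> : a w - (psC (l2 + 1) * psX) *: w = psX *: (g2 + beta *: g1) + psC t0 *: g1.
    by apply: (sub_abD Gsub); apply: (sub_abZ Gsub) => //; apply: F_v_defect.
  rewrite /w (abD Hab) (abX Hab) (abC Hab) a_vE ae1 psCD psC1 S0E; solve_lincomb.
- exists (- (psC l1 - psC l2 - 1)), (g2 + beta *: g1); split; first exact: F_v_defect.
  by rewrite a_vE S0E /w psCB psC1; solve_lincomb.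
- move=> _ /span2 [s [y1 [/span1 [t [g [Gg ->]]] ->]]].
  pose r := psC t0^-1 * (t - s * beta).
  exists r, (s - r * psX), g; split => //.
  apply: etrans (_ : _ = r *: w + (s - r * psX) *: v + g
                         + ((1 - psC t0^-1 * psC t0) * (t - s * beta)) *: e1) _.
    by rewrite /r /w /v; solve_lincomb.
  by rewrite t0K subrr mul0r scale0r addr0.
- move=> r t Fwt.
  have rt0 : r * psX + t = 0.
    apply: indep2; rewrite (_ : (r * psX + t) *: e2 =
      r *: w + t *: v - (r * psX * beta + r * psC t0 + t * beta) *: e1).
      by apply: (sub_abB F1sub); [apply: GF1 | apply: (sub_abZ F1sub)].
    by rewrite /w /v; solve_lincomb.
  have tE : t = - (r * psX) by apply/eqP; rewrite -addr_eq0 addrC rt0.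
  have rt0' : r * psC t0 = 0.
    by apply: indep1; rewrite (_ : _ *: e1 = r *: w + t *: v) // tE /w /v; solve_lincomb.
  have r0 : r = 0 by rewrite -[r]mulr1 -t0K mulrCA rt0' mulr0.
  by rewrite tE r0 mul0r oppr0.
Qed.

End Swap.

Lemma JH_swap n (a : abE n -> abE n) (F : nat -> abE n -> Prop) m (l1 l2 : C) :
  is_ab_structure a -> is_JH a F -> (m.+1 < n)%N ->
  quot_iso_E a (F m) (F m.+1) l1 -> quot_iso_E a (F m.+1) (F m.+2) l2 ->
  ~ congZ l2 l1 ->
  exists (F'j : abE n -> Prop) (lj lj1 : C),
    [/\ is_JH a (fun i => if i == m.+1 then F'j else F i),
        exists x, ~ (F'j x <-> F m.+1 x),
        quot_iso_E a (F m) F'j lj,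
        quot_iso_E a F'j (F m.+2) lj1 &
        congZ l1 lj1 /\ congZ l2 lj].
Proof.
move=> Hab HJH Hmn [e1 [Fe1 span1 indep1 eig1]] [e2 [Fe2 span2 indep2 eig2]] nc.
rewrite eigen_defectE in eig1; rewrite eigen_defectE in eig2.
have [S [g2 [Fg2 eig2E]]] := span1 _ eig2.
have indep (G : abE n -> Prop) e :
    (forall s, G (smul s e) -> forall l, s l = 0) -> forall s, G (s *: e) -> s = 0.
  by move=> ind s /ind /ps0P.
have congZ_refl x : congZ x x by exists 0; rewrite subrr.
have [S0|S0] := eqVneq (S 0%N) 0.
- have [F'j [? ? ? ?]] := swap_split Hab HJH Hmn Fe1 Fe2 span1 (indep _ _ indep1) eig1
    span2 (indep _ _ indep2) Fg2 eig2E (not_congZ_natr_neq0 nc) S0.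
  by exists F'j, l2, l1.
- have [F'j [? ? ? ?]] := swap_nonsplit Hab HJH Hmn Fe1 Fe2 span1 (indep _ _ indep1) eig1
    span2 (indep _ _ indep2) Fg2 eig2E (not_congZ_natr_neq0 nc) S0.
  exists F'j, (l2 + 1), (l1 - 1); split => //; split.
  + by exists 1; rewrite opprB addrC subrK.
  + by exists (-1); rewrite opprD addrA subrr add0r.
Qed.

Theorem mainTheorem4 (n : nat) (a : abE n -> abE n)
  (Hab : is_ab_structure a) (Hreg : is_regular a)
  (F : nat -> abE n -> Prop) (lam : nat -> C)
  (HJH : is_JH a F)
  (Hq : forall i, (0 < i <= n)%N -> quot_iso_E a (F i.-1) (F i) (lam i))
  (j : nat) (Hj : (0 < j)%N) (Hjn : (j < n)%N)
  (Hnc : ~ congZ (lam j.+1) (lam j)) :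
  exists (F'j : abE n -> Prop) (lj lj1 : C),
    [/\ is_JH a (fun i => if i == j then F'j else F i),
        exists x, ~ (F'j x <-> F j x),
        quot_iso_E a (F j.-1) F'j lj,
        quot_iso_E a F'j (F j.+1) lj1 &
        congZ (lam j) lj1 /\ congZ (lam j.+1) lj].
Proof.
case: j Hj Hjn Hnc => [|m] // _ Hmn Hnc.
by apply: JH_swap => //; apply: Hq; [exact: ltnW Hmn | exact: Hmn].
Qed.
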